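(* Let $m,n,k$ be positive integers with $(m,k-1)=1$ and $n=\mathrm{ind}_m(k)$, and let $G=G(m,n,k)=\langle a,b;\ a^m=1,\ b^n=1,\ b^{-1}ab=a^k\rangle$. For every $g\in G$, $\rho(g)$ and $\lambda(g)$ are mu-maps; specifically, for $r\in\mathbb{Z}_m$, $s\in\mathbb{Z}_n$, $\rho(a^rb^s)=\mu(k_s,rk^s)$ and $\lambda(a^rb^s)=\mu(-k_s,-rk^s)$.
   Context: $\mathrm{ind}_m(k)$ is the least positive integer $d$ with $k^d\equiv1\pmod m$; $k_t=k^t-1\pmod m$. Elements of $G$ are written uniquely as $a^ib^j$, $i\in\mathbb{Z}_m$, $j\in\mathbb{Z}_n$. Commutators are $[x,y]=x^{-1}y^{-1}xy$; $(x)\rho(g)=[x,g]$ and $(x)\lambda(g)=[g,x]$ (maps written on the right). For $x,y\in\mathbb{Z}_m$, the mu-map $\mu(x,y):G\to G$ is $(a^ib^j)\mu(x,y)=a^N$ with $N=xik^j-yk_j\pmod m$. *)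

From mathcomp Require Import all_boot all_order all_algebra all_fingroup.
Set Implicit Arguments. Unset Strict Implicit. Unset Printing Implicit Defensive.
Import GRing.Theory Num.Theory.

Definition is_ind (m k n : nat) : Prop :=
  [/\ 0 < n, k ^ n = 1 %[mod m]
    & forall d, 0 < d -> k ^ d = 1 %[mod m] -> n <= d].

(* k_t = k^t - 1 (as an integer; only its class mod m matters). *)
Definition kt (k t : nat) : int := ((k ^ t)%:Z - 1)%R.

(* The mu-map mu(x,y) evaluated at the element a^i b^j :
   a^N with N = x i k^j - y k_j (mod m). *)
Definition mu (gT : finGroupType) (a : gT) (m k : nat) (x y : int) (i j : nat) : gT :=
  (a ^+ `|((x * i%:Z * (k ^ j)%:Z - y * kt k j) %% m%:Z)%Z|%N)%g.

(* Commuting a^e past b^j multiplies the exponent by k^j, so both products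
   x g and g x of x = a^i b^j and g = a^r b^s lie in the coset b^(j+s) <a>.
   Hence [x, g] = (g x)^-1 (x g) is a power of a, whose exponent is read off
   modulo m as k_s i k^j - r k^s k_j; exchanging x and g gives lambda(g). *)

From mathcomp Require Import all_boot all_order all_algebra all_fingroup.
From mathcomp Require Import ring.
Import GRing.Theory Num.Theory.

Set Implicit Arguments.
Unset Strict Implicit.
Unset Printing Implicit Defensive.

Lemma commgE_mulg (gT : groupType) (x y : gT) :
  ([~ x, y] = (y * x)^-1 * (x * y))%g.
Proof. by rewrite invMg /commg /conjg !mulgA. Qed.

Section PowerExponents.
Variables (gT : finGroupType) (a : gT) (m : nat).
Hypotheses (m_gt0 : 0 < m) (a_m : (a ^+ m = 1)%g).

Lemma invg_expg_mul (A B : nat) :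
  ((a ^+ A)^-1 * a ^+ B = a ^+ `|((Posz B - Posz A) %% m)%Z|%N)%g.
Proof.
set d := `|_|%N.
have d_def : Posz d = ((Posz B - Posz A) %% m)%Z.
  by rewrite gez0_abs // modz_ge0 // lt0n_neq0.
have AdB : A + d = B %[mod m].
  suff: Posz ((A + d) %% m) = Posz (B %% m) by case.
  by rewrite -!modz_nat PoszD d_def modzDmr addrC subrK.
by rewrite -[(a ^+ B)%g](expg_mod _ a_m) -AdB expg_mod // expgD mulKg.
Qed.

End PowerExponents.

Section Metacyclic.
Variables (gT : finGroupType) (a b : gT) (m k : nat).
Hypotheses (m_gt0 : 0 < m) (a_m : (a ^+ m = 1)%g) (a_b : (a ^ b = a ^+ k)%g).

Lemma conjXb e j : ((a ^+ e) ^ (b ^+ j) = a ^+ (e * k ^ j))%g.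
Proof.
elim: j => [|j IHj]; first by rewrite conjg1 muln1.
by rewrite expgSr conjgM IHj conjXg a_b -expgM mulnC expnSr mulnA.
Qed.

Lemma mul_normal_form i j r s :
  (a ^+ i * b ^+ j * (a ^+ r * b ^+ s)
     = b ^+ (j + s) * a ^+ ((i * k ^ j + r) * k ^ s))%g.
Proof.
rewrite [(a ^+ i * _)%g]conjgC conjXb !mulgA -(mulgA (b ^+ j)%g) -expgD.
by rewrite -mulgA [(a ^+ _ * _)%g]conjgC conjXb mulgA -expgD.
Qed.

Lemma commg_normal_form i j r s :
  ([~ a ^+ i * b ^+ j, a ^+ r * b ^+ s]%g
     = mu a m k (kt k s) ((r * k ^ s)%N%:Z) i j).
Proof.
rewrite commgE_mulg !mul_normal_form invMg (addnC s j) -mulgA mulKg.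
rewrite (invg_expg_mul m_gt0 a_m) /mu /kt !(PoszM, PoszD).
by congr (_ ^+ `|(_ %% _)%Z|%N)%g; ring.
Qed.

End Metacyclic.

Theorem lemma3p2 (gT : finGroupType) (a b : gT) (m n k : nat) :
  0 < m -> 0 < n -> 0 < k -> coprime m (k - 1) -> is_ind m k n ->
  (a ^+ m = 1)%g -> (b ^+ n = 1)%g -> (a ^ b = a ^+ k)%g ->
  (forall i j i' j', i < m -> j < n -> i' < m -> j' < n ->
     (a ^+ i * b ^+ j = a ^+ i' * b ^+ j')%g -> i = i' /\ j = j') ->
  forall r s, r < m -> s < n ->
  forall i j, i < m -> j < n ->
    [~ a ^+ i * b ^+ j, a ^+ r * b ^+ s]%g
      = mu a m k (kt k s) ((r * k ^ s)%N%:Z) i j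
    /\ [~ a ^+ r * b ^+ s, a ^+ i * b ^+ j]%g
      = mu a m k (- kt k s)%R (- (r * k ^ s)%N%:Z)%R i j.
Proof.
move=> m_gt0 _ _ _ _ a_m _ a_b _ r s _ _ i j _ _.
rewrite !(commg_normal_form m_gt0 a_m a_b); split=> //.
by rewrite /mu /kt !PoszM; congr (_ ^+ `|(_ %% _)%Z|%N)%g; ring.
Qed.
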